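(* Let $T:V\to\mathfrak g$ be a relative Rota–Baxter operator on a Lie triple system $(\mathfrak g,[\cdot,\cdot,\cdot])$ with respect to a representation $(V;\rho)$. Then $$[u,v,w]_T=D(Tu,Tv)w+\rho(Tv,Tw)u-\rho(Tu,Tw)v\qquad(u,v,w\in V)$$ defines a Lie triple system structure on $V$, and $$\varrho(u,v)x=[x,Tu,Tv]-T\big(D(x,Tu)v-\rho(x,Tv)u\big)\qquad(x\in\mathfrak g,\ u,v\in V)$$ defines a representation $\varrho:\otimes^2V\to\mathfrak{gl}(\mathfrak g)$ of $(V,[\cdot,\cdot,\cdot]_T)$ on $\mathfrak g$.
   Context: All vector spaces are over a field of characteristic $0$. A Lie triple system is a vector space with a trilinear bracket satisfying $[x,x,y]=0$, $[x,y,z]+[y,z,x]+[z,x,y]=0$ and $[x,y,[z,w,t]]=[[x,y,z],w,t]+[z,[x,y,w],t]+[z,w,[x,y,t]]$. A representation of a Lie triple system $\mathfrak h$ on $W$ is a bilinear $\rho:\otimes^2\mathfrak h\to\mathfrak{gl}(W)$ with $D(a,b):=\rho(b,a)-\rho(a,b)$ such that $\rho(c,d)\rho(a,b)-\rho(b,d)\rho(a,c)-\rho(a,[b,c,d])+D(b,c)\rho(a,d)=0$ and $\rho([a,b,c],d)+\rho(c,[a,b,d])=[D(a,b),\rho(c,d)]$ for all $a,b,c,d\in\mathfrak h$. A relative Rota–Baxter operator on $\mathfrak g$ with respect to $(V;\rho)$ is a linear $T:V\to\mathfrak g$ with $[Tu,Tv,Tw]=T(D(Tu,Tv)w+\rho(Tv,Tw)u-\rho(Tu,Tw)v)$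 for all $u,v,w\in V$. *)

From HB Require Import structures.
From mathcomp Require Import all_boot all_order all_algebra.
Set Implicit Arguments. Unset Strict Implicit. Unset Printing Implicit Defensive.
Import GRing.Theory.
Local Open Scope ring_scope.

Definition lin (K : fieldType) (U W : lmodType K) (f : U -> W) : Prop :=
  forall (a : K) (x y : U), f (a *: x + y) = a *: f x + f y.

Definition trilinear (K : fieldType) (U W : lmodType K) (br : U -> U -> U -> W) : Prop :=
  (forall y z, lin (fun x => br x y z)) /\
  (forall x z, lin (fun y => br x y z)) /\
  (forall x y, lin (fun z => br x y z)).

Definition LieTripleSystem (K : fieldType) (g : lmodType K) (br : g -> g -> g -> g) : Prop :=
  trilinear br /\
  (forall x y, br x x y = 0) /\
  (forall x y z, br x y z + br y z x + br z x y = 0) /\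
  (forall x y z w t,
      br x y (br z w t) = br (br x y z) w t + br z (br x y w) t + br z w (br x y t)).

Definition Dop (K : fieldType) (h W : lmodType K) (rho : h -> h -> W -> W) (a b : h) : W -> W :=
  fun w => rho b a w - rho a b w.

Definition LTSrep (K : fieldType) (h W : lmodType K) (br : h -> h -> h -> h)
    (rho : h -> h -> W -> W) : Prop :=
  (forall a b, lin (rho a b)) /\
  (forall b w, lin (fun a => rho a b w)) /\
  (forall a w, lin (fun b => rho a b w)) /\
  (forall a b c d w,
      rho c d (rho a b w) - rho b d (rho a c w) - rho a (br b c d) w
      + Dop rho b c (rho a d w) = 0) /\
  (forall a b c d w,
      rho (br a b c) d w + rho c (br a b d) w
      = Dop rho a b (rho c d w) - rho c d (Dop rho a b w)).

Definition relRB (K : fieldType) (g V : lmodType K) (br : g -> g -> g -> g)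
    (rho : g -> g -> V -> V) (T : V -> g) : Prop :=
  lin T /\
  forall u v w, br (T u) (T v) (T w)
                = T (Dop rho (T u) (T v) w + rho (T v) (T w) u - rho (T u) (T w) v).

Definition bracketT (K : fieldType) (g V : lmodType K)
    (rho : g -> g -> V -> V) (T : V -> g) (u v w : V) : V :=
  Dop rho (T u) (T v) w + rho (T v) (T w) u - rho (T u) (T w) v.

Definition varrhoT (K : fieldType) (g V : lmodType K) (br : g -> g -> g -> g)
    (rho : g -> g -> V -> V) (T : V -> g) (u v : V) (x : g) : g :=
  br x (T u) (T v) - T (Dop rho x (T u) v - rho x (T v) u).

(* The graph {(Tu, u)} of T is a Lie triple subsystem of the semidirect product
   g ⋉_ρ V exactly when T is a relative Rota–Baxter operator, and [·,·,·]_T is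
   the bracket transported along u ↦ (Tu, u).  Restricting the adjoint
   representation of g ⋉_ρ V to the graph gives a representation of V on
   g ⋉_ρ V, and the projection (x, u) ↦ x − Tu, whose kernel is the graph,
   intertwines it with ϱ; so ϱ is the induced representation on the quotient,
   which is identified with g. *)

From HB Require Import structures.
From mathcomp Require Import all_boot all_order all_algebra ring.
Set Implicit Arguments. Unset Strict Implicit. Unset Printing Implicit Defensive.
Import GRing.Theory.
Local Open Scope ring_scope.

(* [ring] only works in commutative rings: identities of abelian groups are
   checked inside the trivial extension int ⋉ M, into which M embeds
   additively. *)
Section TrivialExtension.
Variable M : zmodType.

Definition triv_ext : Type := (int * M)%type.
HB.instance Definition _ := GRing.Zmodule.on triv_ext.

Definition triv_ext_one : triv_ext := (1, 0).
Definition triv_ext_mul (x y : triv_ext) : triv_ext :=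
  (x.1 * y.1, y.2 *~ x.1 + x.2 *~ y.1).

Lemma triv_ext_mulA : associative triv_ext_mul.
Proof.
move=> [a x] [b y] [c z]; congr pair; rewrite /= ?mulrA //.
by rewrite !mulrzDl -!mulrzA [b * a]mulrC [c * a]mulrC addrA.
Qed.

Lemma triv_ext_mulC : commutative triv_ext_mul.
Proof. by move=> [a x] [b y]; rewrite /triv_ext_mul /= mulrC addrC. Qed.

Lemma triv_ext_mul1 : left_id triv_ext_one triv_ext_mul.
Proof. by move=> [a x]; rewrite /triv_ext_mul /= mul1r mulr1z mul0rz addr0. Qed.

Lemma triv_ext_mulDl : left_distributive triv_ext_mul +%R.
Proof.
move=> [a x] [b y] [c z]; rewrite /triv_ext_mul /=; congr pair.
  by rewrite mulrDl.
by rewrite mulrzDr mulrzDl addrACA.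
Qed.

Lemma triv_ext_one_neq0 : triv_ext_one != 0.
Proof. by rewrite xpair_eqE negb_and oner_eq0. Qed.

HB.instance Definition _ := GRing.Zmodule_isComNzRing.Build triv_ext
  triv_ext_mulA triv_ext_mulC triv_ext_mul1 triv_ext_mulDl triv_ext_one_neq0.

Definition triv_ext_inj (x : M) : triv_ext := (0, x).

Lemma triv_ext_inj_is_additive : additive triv_ext_inj.
Proof. by move=> x y; rewrite /triv_ext_inj; congr pair; rewrite /= subrr. Qed.

HB.instance Definition _ :=
  GRing.isAdditive.Build M triv_ext triv_ext_inj triv_ext_inj_is_additive.

Lemma triv_ext_injK : cancel triv_ext_inj snd. Proof. by []. Qed.

End TrivialExtension.

Ltac zmodule := apply: (can_inj (@triv_ext_injK _)); ring.

Lemma eq_by_combination (M : zmodType) (k : int) (a b x y : M) :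
  a = b -> x - y = (a - b) *~ k -> x = y.
Proof. by move=> -> /eqP; rewrite subrr mul0rz subr_eq0 => /eqP. Qed.

Section Linear.
Variables (K : fieldType) (U W : lmodType K) (f : U -> W).
Hypothesis f_lin : lin f.

Lemma linD x y : f (x + y) = f x + f y.
Proof. by have := f_lin 1 x y; rewrite !scale1r. Qed.

Lemma lin0 : f 0 = 0.
Proof. by apply: (addrI (f 0)); rewrite -linD !addr0. Qed.

Lemma linZ a x : f (a *: x) = a *: f x.
Proof. by have := f_lin a x 0; rewrite !addr0 lin0 addr0. Qed.

Lemma linN x : f (- x) = - f x.
Proof. by rewrite -scaleN1r linZ scaleN1r. Qed.

Lemma linB x y : f (x - y) = f x - f y.
Proof. by rewrite linD linN. Qed.

End Linear.

Lemma lin_comp (K : fieldType) (U V W : lmodType K) (f : V -> W) (g : U -> V) :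
  lin f -> lin g -> lin (fun x => f (g x)).
Proof. by move=> f_lin g_lin a x y; rewrite g_lin f_lin. Qed.

Section LieTripleSystemTheory.
Variables (K : fieldType) (L : lmodType K) (B : L -> L -> L -> L).
Hypothesis HB : LieTripleSystem B.

Lemma lts_skew x y z : B x y z = - B y x z.
Proof.
have [[B1 [B2 _]] [B0 _]] := HB.
have := B0 (x + y) z; rewrite (linD (B1 _ _)) !(linD (B2 _ _)) !B0 add0r addr0.
by move/eqP; rewrite addr_eq0 => /eqP.
Qed.

Lemma lts_sub_swap x y z : B x y z - B x z y = B z y x.
Proof.
have [_ [_ [BJ _]]] := HB.
have := BJ x y z; rewrite [B z x y]lts_skew [B y z x]lts_skew => E.
by apply: (eq_by_combination (k := 1) E); zmodule.
Qed.

Lemma lts_adjoint_rep : LTSrep B (fun a b x => B x a b).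
Proof.
have [[B1 [B2 B3]] [_ [_ BF]]] := HB.
split; first exact: B1.
split; first by move=> b w; apply: B2.
split; first by move=> a w; apply: B3.
split=> a b c d w; rewrite /Dop.
  by rewrite lts_sub_swap [B w a (B _ _ _)]BF [B b (B w a c) d]lts_skew; zmodule.
by rewrite !lts_sub_swap [B a b (B w c d)]BF; zmodule.
Qed.

End LieTripleSystemTheory.

Lemma lts_pullback (K : fieldType) (L V : lmodType K) (B : L -> L -> L -> L)
    (brV : V -> V -> V -> V) (f : V -> L) :
  LieTripleSystem B -> lin f -> injective f ->
  (forall u v w, f (brV u v w) = B (f u) (f v) (f w)) ->
  LieTripleSystem brV.
Proof.
move=> [[B1 [B2 B3]] [B0 [BJ BF]]] f_lin f_inj f_hom.
split; first split; last split.
- by move=> v w a x y; apply: f_inj; rewrite f_lin !f_hom f_lin B1.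
- by split=> u w a x y; apply: f_inj; rewrite f_lin !f_hom f_lin ?B2 ?B3.
- by move=> u v; apply: f_inj; rewrite f_hom B0 lin0.
split=> *; apply: f_inj; rewrite !(linD f_lin) !f_hom ?lin0 //.
Qed.

Lemma ltsrep_restrict (K : fieldType) (h V W : lmodType K) (brh : h -> h -> h -> h)
    (brV : V -> V -> V -> V) (sigma : h -> h -> W -> W) (f : V -> h) :
  LTSrep brh sigma -> lin f ->
  (forall u v w, f (brV u v w) = brh (f u) (f v) (f w)) ->
  LTSrep brV (fun u v => sigma (f u) (f v)).
Proof.
move=> [S3 [S1 [S2 [SA SB]]]] f_lin f_hom.
split; first by move=> *; apply: S3.
split; first by move=> b w; apply: lin_comp (S1 _ _) f_lin.
split; first by move=> a w; apply: lin_comp (S2 _ _) f_lin.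
by split=> *; rewrite !f_hom; [apply: SA | apply: SB].
Qed.

Lemma ltsrep_quotient (K : fieldType) (h X W : lmodType K) (br : h -> h -> h -> h)
    (sigma : h -> h -> X -> X) (p : X -> W) (s : W -> X) (varrho : h -> h -> W -> W) :
  LTSrep br sigma -> lin p -> cancel s p ->
  (forall a b x, p (sigma a b x) = varrho a b (p x)) ->
  LTSrep br varrho.
Proof.
move=> [S3 [S1 [S2 [SA SB]]]] p_lin sK p_equi.
have varrhoE a b w : varrho a b w = p (sigma a b (s w)) by rewrite p_equi sK.
split; first by move=> a b c w w'; rewrite -(sK w) -(sK w') -p_lin -!p_equi S3 p_lin.
split; first by move=> b w c a a'; rewrite !varrhoE S1 p_lin.
split; first by move=> a w c b b'; rewrite !varrhoE S2 p_lin.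
split=> a b c d w; rewrite -(sK w) /Dop.
  have := congr1 p (SA a b c d (s w)).
  by rewrite /Dop !(linD p_lin, linN p_lin, p_equi) (lin0 p_lin).
have := congr1 p (SB a b c d (s w)).
by rewrite /Dop !(linD p_lin, linN p_lin, p_equi).
Qed.

Section SemidirectProduct.
Variables (K : fieldType) (g V : lmodType K) (br : g -> g -> g -> g) (rho : g -> g -> V -> V).

Definition semidirect (X Y Z : g * V) : g * V :=
  (br X.1 Y.1 Z.1, Dop rho X.1 Y.1 Z.2 + rho Y.1 Z.1 X.2 - rho X.1 Z.1 Y.2).

Hypotheses (Hbr : LieTripleSystem br) (Hrho : LTSrep br rho).

Lemma semidirect_trilinear : trilinear semidirect.
Proof.
have [[B1 [B2 B3]] _] := Hbr; have [R3 [R1 [R2 _]]] := Hrho.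
split; last split.
- move=> [y v] [z w] a [x1 u1] [x2 u2]; apply: injective_projections => /=.
    exact: B1.
  rewrite /Dop R1 R2 R3 R1 !scalerDr !scalerN; zmodule.
- move=> [x u] [z w] a [y1 v1] [y2 v2]; apply: injective_projections => /=.
    exact: B2.
  rewrite /Dop R1 R2 R3 R1 !scalerDr !scalerN; zmodule.
move=> [x u] [y v] a [z1 w1] [z2 w2]; apply: injective_projections => /=.
  exact: B3.
rewrite /Dop !R3 !R2 !scalerDr !scalerN; zmodule.
Qed.

Lemma semidirect_lts : LieTripleSystem semidirect.
Proof.
have [_ [B0 [BJ BF]]] := Hbr; have [R3 [_ [_ [RA RB]]]] := Hrho.
split; first exact: semidirect_trilinear.
split.
  move=> [x u] [y v]; apply: injective_projections => /=; [exact: B0 | rewrite /Dop; zmodule].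
split.
  move=> [x u] [y v] [z w]; apply: injective_projections => /=; [exact: BJ | rewrite /Dop; zmodule].
move=> [x1 u1] [x2 u2] [x3 u3] [x4 u4] [x5 u5]; apply: injective_projections => /=.
  exact: BF.
rewrite /Dop !(linD (R3 _ _)) !(linN (R3 _ _)).
have h1 := RB x1 x2 x3 x4 u5; have h2 := RB x1 x2 x4 x3 u5; have h3 := RB x1 x2 x4 x5 u3.
have h4 := RB x1 x2 x3 x5 u4; have h5 := RA x2 x3 x4 x5 u1; have h6 := RA x1 x3 x4 x5 u2.
rewrite /Dop !(linD (R3 _ _)) !(linN (R3 _ _)) in h1 h2 h3 h4 h5 h6.
apply: (eq_by_combination (k := 1) h1); apply: (eq_by_combination (k := -1) h2).
apply: (eq_by_combination (k := -1) h3); apply: (eq_by_combination (k := 1) h4).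
apply: (eq_by_combination (k := -1) h5); apply: (eq_by_combination (k := 1) h6).
zmodule.
Qed.

End SemidirectProduct.

Section RotaBaxterGraph.
Variables (K : fieldType) (g V : lmodType K) (br : g -> g -> g -> g)
  (rho : g -> g -> V -> V) (T : V -> g).

Definition graph (u : V) : g * V := (T u, u).
Definition graph_proj (X : g * V) : g := X.1 - T X.2.

Lemma graph_inj : injective graph.
Proof. by move=> u v [_]. Qed.

Hypothesis HT : relRB br rho T.

Lemma graph_lin : lin graph.
Proof. by move=> a u v; apply: injective_projections => //=; apply: HT.1. Qed.

Lemma graph_hom u v w :
  graph (bracketT rho T u v w) = semidirect br rho (graph u) (graph v) (graph w).
Proof. by apply: injective_projections => //=; rewrite HT.2. Qed.

Lemma graph_proj_lin : lin graph_proj.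
Proof. by move=> a [x u] [y v]; rewrite /graph_proj /= HT.1 scalerBr; zmodule. Qed.

Lemma graph_proj_pair0 : cancel (fun x => (x, 0)) graph_proj.
Proof. by move=> x; rewrite /graph_proj /= (lin0 HT.1) subr0. Qed.

Hypotheses (Hbr : LieTripleSystem br) (Hrho : LTSrep br rho).

Lemma graph_proj_equivariant u v X :
  graph_proj (semidirect br rho X (graph u) (graph v))
  = varrhoT br rho T u v (graph_proj X).
Proof.
case: X => y w; have [T_lin RB] := HT; have [[B1 _] _] := Hbr; have [_ [R1 [R2 _]]] := Hrho.
rewrite /graph_proj /varrhoT /semidirect /Dop /= (linB (B1 _ _)) RB.
rewrite !(linB (R1 _ _)) !(linB (R2 _ _)) !(linD T_lin, linN T_lin); zmodule.
Qed.

End RotaBaxterGraph.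

Unset Implicit Arguments.

Theorem corollary5p15 (K : fieldType) (g V : lmodType K)
    (br : g -> g -> g -> g) (rho : g -> g -> V -> V) (T : V -> g) :
  [pchar K] =i pred0 ->
  LieTripleSystem br ->
  LTSrep br rho ->
  relRB br rho T ->
  LieTripleSystem (bracketT rho T) /\ LTSrep (bracketT rho T) (varrhoT br rho T).
Proof.
move=> _ Hbr Hrho HT.
have Hsd := semidirect_lts Hbr Hrho.
split.
  by apply: (lts_pullback Hsd (graph_lin HT) _ (graph_hom HT)); apply: graph_inj.
apply: ltsrep_quotient (graph_proj_lin HT) (graph_proj_pair0 HT)
  (graph_proj_equivariant HT Hbr Hrho).
exact: ltsrep_restrict (lts_adjoint_rep Hsd) (graph_lin HT) (graph_hom HT).
Qed.
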